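(* Let $\mathbb{F}$ be a field of characteristic $2$. For every $w\in W^{(2)}$ there is a cycle in $\widetilde H_3(\mathbb{F})$ whose voltage with respect to $\ell$ equals $w$.
   Context: Let $V=\mathbb{F}^4$, $V^*$ its dual. $\widetilde H_3(\mathbb{F})$ is the graph whose vertices are tensors $v\otimes f\in V\otimes V^*$ with $f(v)\neq0$, with $v\otimes f\perp w\otimes g$ iff $f(w)=g(v)=0$. Let $W=\bigwedge^2V$, fix an isomorphism $\chi:\bigwedge^4V\to\mathbb{F}$, identify $\bigwedge^2V^*$ with $(\bigwedge^2V)^*$ via $(f_1\wedge f_2)(v_1\wedge v_2)=f_1(v_1)f_2(v_2)-f_1(v_2)f_2(v_1)$, let $\psi:\bigwedge^2V\to\bigwedge^2V^*$ be $\psi(\hat w)(\hat v)=\chi(\hat v\wedge\hat w)$ and $\phi=\psi^{-1}$. $S_2(W)$ is the symmetric square of $W$ (product $ab$, $a^2=aa$), and $W^{(2)}=\langle\hat w^2:\hat w\in W\rangle$. $\ell$ assigns to the dart from $v_1\otimes h_1$ to $v_2\otimes h_2$ the element $h_1(v_1)^{-1}h_2(v_2)^{-1}(v_1\wedge v_2)\,\phi(h_1\wedge h_2)$ of $S_2(W)$; the voltage of a cycle is the sum of the voltages of its darts. *)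

From HB Require Import structures.
From mathcomp Require Import all_boot all_order all_algebra.
From mathcomp Require Import mpoly.
From mathcomp Require Import ring.
Set Implicit Arguments. Unset Strict Implicit. Unset Printing Implicit Defensive.
Import Order.TTheory GRing.Theory Num.Theory.
Local Open Scope ring_scope.

(* V = F^4 : row vectors 'rV[F]_4 (coordinates in the standard basis e_0..e_3).
   V^* = F^4 : row vectors, coordinates in the dual basis e_0^*..e_3^*.
   W = /\^2 V : 'rV[F]_6, coordinates in the basis e_i/\e_j (i<j), ordered
     lexicographically: (01),(02),(03),(12),(13),(23).
   /\^2 V^* : 'rV[F]_6, coordinates in the basis e_i^*/\e_j^* (i<j), same order.
     Under the identification of the paper,
     (f1/\f2)(v1/\v2) = f1(v1)f2(v2) - f1(v2)f2(v1),
     the basis e_i^*/\e_j^* is the dual basis of e_i/\e_j, so the functional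
     attached to xi is  w |-> \sum_k xi_k w_k  (see lemma [evalW_wedge]).
   /\^4 V is 1-dimensional with basis e_0/\e_1/\e_2/\e_3; chi is the
     isomorphism sending this basis vector to a nonzero scalar c.
   S(W) = polynomial ring F[X_0..X_5] on the basis of W; S_2(W) is its
     homogeneous degree-2 part, and the symmetric product ab is the
     polynomial product. *)

Definition pidx (k : 'I_6) : 'I_4 * 'I_4 :=
  nth (inord 0, inord 0)
    [:: (inord 0, inord 1); (inord 0, inord 2); (inord 0, inord 3);
        (inord 1, inord 2); (inord 1, inord 3); (inord 2, inord 3)] k.

Section Defs.
Variable F : fieldType.

Definition pairing (f v : 'rV[F]_4) : F := \sum_(i < 4) f 0 i * v 0 i.

Definition wedge2 (x y : 'rV[F]_4) : 'rV[F]_6 :=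
  \row_k (x 0 (pidx k).1 * y 0 (pidx k).2 - x 0 (pidx k).2 * y 0 (pidx k).1).

Definition evalW (xi w : 'rV[F]_6) : F := \sum_(k < 6) xi 0 k * w 0 k.

(* coefficient of e_0/\e_1/\e_2/\e_3 in x /\ y, for x y in /\^2 V *)
Definition top (x y : 'rV[F]_6) : F :=
  x 0 (inord 0) * y 0 (inord 5) - x 0 (inord 1) * y 0 (inord 4)
  + x 0 (inord 2) * y 0 (inord 3) + x 0 (inord 3) * y 0 (inord 2)
  - x 0 (inord 4) * y 0 (inord 1) + x 0 (inord 5) * y 0 (inord 0).

Definition chi (c : F) (t : F) : F := c * t.

Definition basisW (k : 'I_6) : 'rV[F]_6 := \row_j (j == k)%:R.

(* psi(w) in /\^2 V^* (dual-basis coordinates): psi(w)(v) = chi(v /\ w) *)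
Definition psi (c : F) (w : 'rV[F]_6) : 'rV[F]_6 :=
  \row_k chi c (top (basisW k) w).

Definition psimx (c : F) : 'M[F]_6 := \matrix_(i, j) psi c (basisW i) 0 j.

Definition phi (c : F) (xi : 'rV[F]_6) : 'rV[F]_6 := xi *m invmx (psimx c).

Definition lin (w : 'rV[F]_6) : {mpoly F[6]} := \sum_(k < 6) w 0 k *: 'X_k.

(* vertices of H~_3(F): represented by pairs (v, f), standing for v (x) f *)
Definition tensor (a : 'rV[F]_4 * 'rV[F]_4) : 'M[F]_4 := a.1^T *m a.2.
Definition is_vertex (a : 'rV[F]_4 * 'rV[F]_4) : bool := pairing a.2 a.1 != 0.
Definition adj (a b : 'rV[F]_4 * 'rV[F]_4) : bool :=
  (pairing a.2 b.1 == 0) && (pairing b.2 a.1 == 0).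

Definition dart_voltage (c : F) (a b : 'rV[F]_4 * 'rV[F]_4) : {mpoly F[6]} :=
  ((pairing a.2 a.1)^-1 * (pairing b.2 b.1)^-1) *:
    (lin (wedge2 a.1 b.1) * lin (phi c (wedge2 a.2 b.2))).

Definition is_cycle (s : seq ('rV[F]_4 * 'rV[F]_4)) : Prop :=
  [/\ (3 <= size s)%N, all is_vertex s, uniq (map tensor s) & cycle adj s].

Definition voltage (c : F) (s : seq ('rV[F]_4 * 'rV[F]_4)) : {mpoly F[6]} :=
  \sum_(p <- zip s (rot 1 s)) dart_voltage c p.1 p.2.

Definition in_W2 (x : {mpoly F[6]}) : Prop :=
  exists s : seq (F * 'rV[F]_6), x = \sum_(p <- s) p.1 *: (lin p.2 ^+ 2).

Lemma evalW_wedge (f1 f2 v1 v2 : 'rV[F]_4) :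
  evalW (wedge2 f1 f2) (wedge2 v1 v2) =
  pairing f1 v1 * pairing f2 v2 - pairing f1 v2 * pairing f2 v1.
Proof.
have H (g : 'rV[F]_4) : exists a0 a1 a2 a3 : F,
    forall i : 'I_4, g 0 i = nth 0 [:: a0; a1; a2; a3] (val i).
  exists (g 0 (inord 0)), (g 0 (inord 1)), (g 0 (inord 2)), (g 0 (inord 3)).
  by case=> [[|[|[|[|n]]]] Hn] //=; congr (g 0 _); apply/val_inj; rewrite /= inordK.
have [a0 [a1 [a2 [a3 Ha]]]] := H f1.
have [b0 [b1 [b2 [b3 Hb]]]] := H f2.
have [c0 [c1 [c2 [c3 Hc]]]] := H v1.
have [d0 [d1 [d2 [d3 Hd]]]] := H v2.
rewrite /evalW /pairing /wedge2 !big_ord_recr !big_ord0 /= !mxE /pidx /=.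
rewrite !Ha !Hb !Hc !Hd /= !inordK //=.
ring.
Qed.
End Defs.

From HB Require Import structures.
From mathcomp Require Import all_boot all_order all_algebra.
From mathcomp Require Import mpoly.
From mathcomp Require Import ring.
Set Implicit Arguments. Unset Strict Implicit. Unset Printing Implicit Defensive.
Import GRing.Theory.
Local Open Scope ring_scope.

(* In characteristic 2 squaring is additive, so W^(2) consists of the diagonal
   quadratic forms sum_k mu_k e_k^2 in a basis e_k of W.  The map phi is c^-1
   times a signed permutation of coordinates, and an explicit 16-cycle of
   vertices v (x) f with f(v) = 1, depending on six free parameters t_k, has
   voltage c^-1 (sum_k t_k e_k^2 + 2 q_t) for some quadratic form q_t; in
   characteristic 2 this is c^-1 sum_k t_k e_k^2, and t_k = c mu_k gives w. *)

Lemma sqr_sum_pchar2 (R : comNzRingType) (I : Type) (r : seq I) (f : I -> R) :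
  2 \in [pchar R] -> (\sum_(i <- r) f i) ^+ 2 = \sum_(i <- r) f i ^+ 2.
Proof. by move=> ch2; rewrite -pFrobenius_autE rmorph_sum. Qed.

Section DiagonalCycles.
Variable F : fieldType.
Implicit Types (c : F) (t : nat -> F).

Definition row4 (a0 a1 a2 a3 : F) : 'rV[F]_4 := \row_(i < 4) [:: a0; a1; a2; a3]`_i.

Definition row6 (a0 a1 a2 a3 a4 a5 : F) : 'rV[F]_6 :=
  \row_(i < 6) [:: a0; a1; a2; a3; a4; a5]`_i.

Definition X (k : nat) : {mpoly F[6]} := 'X_(inord k).

Lemma mpolyX_ord (i : 'I_6) : 'X_i = X i.
Proof. by rewrite /X inord_val. Qed.

Lemma pairing_row4 b0 b1 b2 b3 a0 a1 a2 a3 :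
  pairing (row4 b0 b1 b2 b3) (row4 a0 a1 a2 a3) =
  b0 * a0 + b1 * a1 + b2 * a2 + b3 * a3.
Proof. by rewrite /pairing !big_ord_recr big_ord0 /= !mxE /= add0r. Qed.

Lemma tensor_row4 a0 a1 a2 a3 b0 b1 b2 b3 (i j : nat) : (i < 4)%N -> (j < 4)%N ->
  tensor (row4 a0 a1 a2 a3, row4 b0 b1 b2 b3) (inord i) (inord j) =
  [:: a0; a1; a2; a3]`_i * [:: b0; b1; b2; b3]`_j.
Proof. by move=> lti ltj; rewrite /tensor !mxE big_ord1 !mxE !inordK. Qed.

Lemma wedge2_row4 x0 x1 x2 x3 y0 y1 y2 y3 :
  wedge2 (row4 x0 x1 x2 x3) (row4 y0 y1 y2 y3) =
  row6 (x0 * y1 - x1 * y0) (x0 * y2 - x2 * y0) (x0 * y3 - x3 * y0)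
       (x1 * y2 - x2 * y1) (x1 * y3 - x3 * y1) (x2 * y3 - x3 * y2).
Proof.
apply/rowP => k; rewrite !mxE /pidx.
by case: k => [[|[|[|[|[|[|k]]]]]] ltk] //=; rewrite ?mxE !inordK.
Qed.

Lemma linZ (a : F) (w : 'rV[F]_6) : lin (a *: w) = a *: lin w.
Proof.
by rewrite /lin scaler_sumr; apply: eq_bigr => k _; rewrite mxE scalerA.
Qed.

Lemma lin_row6 w0 w1 w2 w3 w4 w5 :
  lin (row6 w0 w1 w2 w3 w4 w5) =
  w0 *: X 0 + w1 *: X 1 + w2 *: X 2 + w3 *: X 3 + w4 *: X 4 + w5 *: X 5.
Proof. by rewrite /lin !big_ord_recl big_ord0 !mxE !mpolyX_ord /= !addrA addr0. Qed.

Lemma lin_sqr_pchar2 (w : 'rV[F]_6) : 2 \in [pchar F] ->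
  lin w ^+ 2 = \sum_(k < 6) w 0 k ^+ 2 *: 'X_k ^+ 2.
Proof.
move=> ch2; rewrite sqr_sum_pchar2 ?pchar_lalg //.
by apply: eq_bigr => k _; rewrite exprZn.
Qed.

Lemma in_W2_diagonal (w : {mpoly F[6]}) : 2 \in [pchar F] -> in_W2 w ->
  exists mu : nat -> F, w = \sum_(k < 6) mu k *: 'X_k ^+ 2.
Proof.
move=> ch2 [s ->]; exists (fun k => \sum_(p <- s) p.1 * p.2 0 (inord k) ^+ 2).
under eq_bigr do rewrite lin_sqr_pchar2 // scaler_sumr.
rewrite exchange_big; apply: eq_bigr => k _ /=.
by rewrite scaler_suml; apply: eq_bigr => p _; rewrite scalerA inord_val.
Qed.

Definition hodge : 'M[F]_6 :=
  \matrix_(i < 6, j < 6)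
    if (i + j == 5)%N then (if (i == 1 :> nat) || (i == 4 :> nat) then -1 else 1)
    else 0.

Lemma psimx_hodge c : psimx c = c *: hodge.
Proof.
apply/matrixP => i j; rewrite /psimx /psi /chi /top !mxE -!val_eqE /= !inordK //.
by case: i => [[|[|[|[|[|[|i]]]]]] lti] //; case: j => [[|[|[|[|[|[|j]]]]]] ltj] //=; ring.
Qed.

Lemma hodge_sqr : hodge *m hodge = 1%:M.
Proof.
apply/matrixP => i j; rewrite !mxE !big_ord_recl big_ord0 !mxE /=.
by case: i => [[|[|[|[|[|[|i]]]]]] lti] //; case: j => [[|[|[|[|[|[|j]]]]]] ltj] //=; ring.
Qed.

Lemma invmx_psimx c : c != 0 -> invmx (psimx c) = c^-1 *: hodge.
Proof.
move=> c0; have psiK : psimx c *m (c^-1 *: hodge) = 1%:M.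
  by rewrite psimx_hodge -scalemxAl -scalemxAr hodge_sqr scalerA divff ?scale1r.
have [psi_unit _] := mulmx1_unit psiK.
by rewrite -[RHS]mul1mx -(mulVmx psi_unit) -mulmxA psiK mulmx1.
Qed.

Lemma phi_row6 c z0 z1 z2 z3 z4 z5 : c != 0 ->
  phi c (row6 z0 z1 z2 z3 z4 z5) = c^-1 *: row6 z5 (- z4) z3 z2 (- z1) z0.
Proof.
move=> c0; rewrite /phi invmx_psimx // -scalemxAr; congr (_ *: _).
apply/rowP => k; rewrite !mxE !big_ord_recl big_ord0 !mxE /=.
by case: k => [[|[|[|[|[|[|k]]]]]] ltk] //=; ring.
Qed.

(* Every vertex v (x) f below has f(v) = 1; some consecutive vertices are orthogonal
   only because 1 + 1 = 0. *)
Definition diag_cycle t : seq ('rV[F]_4 * 'rV[F]_4) :=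
  [:: (row4 1 0 0 0, row4 1 0 0 0);
      (row4 0 1 1 1, row4 0 0 1 0);
      (row4 0 1 0 1, row4 (t 4) 1 1 0);
      (row4 0 0 0 1, row4 0 1 1 1);
      (row4 0 0 1 1, row4 (t 5) 0 1 0);
      (row4 0 1 0 0, row4 0 1 0 0);
      (row4 0 0 1 0, row4 0 0 1 0);
      (row4 0 1 0 0, row4 1 1 0 1);
      (row4 1 0 (t 3) 1, row4 0 0 0 1);
      (row4 1 0 0 0, row4 1 0 0 1);
      (row4 1 1 (t 1) 1, row4 0 0 0 1);
      (row4 1 1 0 0, row4 0 1 0 1);
      (row4 1 0 0 0, row4 1 1 (t 0) 0);
      (row4 0 0 0 1, row4 0 0 0 1);
      (row4 1 0 1 0, row4 0 1 1 0);
      (row4 0 1 1 (t 2), row4 0 1 0 0)].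

(* These ten entries of the tensors of [diag_cycle t] never involve t, and
   their zero pattern already tells the sixteen tensors apart. *)
Definition zero_pattern (M : 'M[F]_4) : seq bool :=
  [seq M (inord ij.1) (inord ij.2) != 0 | ij <- [:: (0, 0); (0, 1); (0, 3);
     (1, 1); (1, 2); (1, 3); (2, 1); (2, 2); (3, 2); (3, 3)]%N].

Lemma diag_cycle_normalized t : all (fun a => pairing a.2 a.1 == 1) (diag_cycle t).
Proof. by rewrite /= !pairing_row4 !(mul0r, mulr0, mul1r, mulr1, add0r, addr0) eqxx. Qed.

Lemma diag_cycle_is_cycle t : 2 \in [pchar F] -> is_cycle (diag_cycle t).
Proof.
move=> ch2; split=> //.
- apply: sub_all (diag_cycle_normalized t) => a /eqP pairing1.
  by rewrite /is_vertex pairing1 oner_neq0.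
- apply: (@map_uniq _ _ zero_pattern).
  rewrite !map_cons /zero_pattern !map_cons !tensor_row4 //=.
  by rewrite !(mul0r, mulr0, mul1r, mulr1) eqxx oner_neq0.
rewrite /= /adj /= !pairing_row4 !(mul0r, mulr0, mul1r, mulr1, add0r, addr0) eqxx /=.
by rewrite (addrr_pchar2 ch2) eqxx.
Qed.

Definition voltage_excess t : {mpoly F[6]} :=
  2%:R *: X 0 * X 5 - t 1 *: X 1 ^+ 2 - 2%:R *: X 1 * X 2 - 2%:R *: X 1 * X 4
  - t 2 *: X 2 ^+ 2 + 4%:R *: X 2 * X 3 - X 2 * X 5 - t 4 *: X 4 ^+ 2
  + (t 4 - t 5) *: X 4 * X 5.

Lemma voltage_diag_cycle c t : c != 0 ->
  voltage c (diag_cycle t) =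
  c^-1 *: (\sum_(k < 6) t k *: 'X_k ^+ 2 + voltage_excess t *+ 2).
Proof.
move=> c0; rewrite /voltage /= !big_cons big_nil /dart_voltage.
rewrite !pairing_row4 !(mul0r, mulr0, mul1r, mulr1, add0r, addr0) invr1 mulr1 !scale1r.
rewrite !wedge2_row4 !phi_row6 // !linZ !lin_row6.
rewrite !big_ord_recl big_ord0 !mpolyX_ord /voltage_excess /=.
move: c^-1 => d; rewrite -!mul_mpolyC.
ring.
Qed.

End DiagonalCycles.

Unset Implicit Arguments.

Theorem lemma3p12 (F : fieldType) (c : F) :
  2 \in [pchar F] -> c != 0 ->
  forall w : {mpoly F[6]}, in_W2 w ->
  exists s : seq ('rV[F]_4 * 'rV[F]_4), is_cycle s /\ voltage c s = w.
Proof.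
move=> ch2 c0 w /(in_W2_diagonal ch2) [mu ->].
exists (diag_cycle (fun k => c * mu k)); split; first exact: diag_cycle_is_cycle.
have ch2_mpoly : 2 \in [pchar {mpoly F[6]}] by rewrite pchar_lalg.
rewrite voltage_diag_cycle // (mulrn_pchar ch2_mpoly) addr0 scaler_sumr.
by apply: eq_bigr => k _; rewrite scalerA mulKf.
Qed.
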